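(* Let $1<p<\infty$. For every $q\geq p$ we have $\ell_p\subset\ell_q$ (as sets of sequences), and every rectifiable curve in $\ell_p$ is also a rectifiable curve in $\ell_q$. Moreover, there exists a curve $\Gamma\subset\ell_p$ such that $\mathcal{H}^1_{\ell_q}(\Gamma)<\infty$ for every $q>p$, but $\mathcal{H}^1_{\ell_p}(\Gamma)=\infty$.
   Context: $\ell_r$ denotes the real Banach space of sequences $x=(x_1,x_2,\dots)$ with $|x|_r=(\sum_i|x_i|^r)^{1/r}<\infty$. A curve in a metric space is the image of a continuous map $[0,1]\to$ the space; it is rectifiable if its one-dimensional Hausdorff measure is finite. $\mathcal{H}^1_{\ell_r}$ denotes the one-dimensional Hausdorff measure computed with respect to the norm $|\cdot|_r$. *)

From Stdlib Require Import Reals Lra.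
Open Scope R_scope.

Definition rseq := nat -> R.

Definition seq_sub (x y : rseq) : rseq := fun k => x k - y k.

(* a^r for a >= 0, r > 0, with the convention 0^r = 0. *)
Definition rpow (a r : R) : R :=
  if Rlt_dec 0 a then Rpower a r else 0.

(* |x|_r <= d, i.e. sum_k |x_k|^r <= d^r (all partial sums bounded). *)
Definition lr_norm_le (r : R) (x : rseq) (d : R) : Prop :=
  0 <= d /\ forall N : nat, sum_f_R0 (fun k => rpow (Rabs (x k)) r) N <= rpow d r.

Definition in_lr (r : R) (x : rseq) : Prop := exists d : R, lr_norm_le r x d.

Definition rset := rseq -> Prop.

(* H^1_{l_r}(E) <= M: for every delta > 0 and eps > 0 there is a countable
   cover (C_i) of E by sets of |.|_r-diameter at most d_i <= delta with
   sum_i d_i <= M + eps.  (This unfolds H^1 = lim_{delta->0} H^1_delta,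
   H^1_delta(E) = inf { sum diam C_i : E subset U C_i, diam C_i <= delta }.) *)
Definition H1_le (r : R) (E : rset) (M : R) : Prop :=
  forall delta eps : R, 0 < delta -> 0 < eps ->
    exists (C : nat -> rset) (d : nat -> R),
      (forall x, E x -> exists i, C i x) /\
      (forall i, 0 <= d i <= delta) /\
      (forall i x y, C i x -> C i y -> lr_norm_le r (seq_sub x y) (d i)) /\
      (forall N, sum_f_R0 d N <= M + eps).

Definition H1_finite (r : R) (E : rset) : Prop := exists M : R, H1_le r E M.

Definition lr_continuous_on01 (r : R) (gamma : R -> rseq) : Prop :=
  (forall t, 0 <= t <= 1 -> in_lr r (gamma t)) /\
  (forall t, 0 <= t <= 1 -> forall eps, 0 < eps ->
     exists delta, 0 < delta /\
       forall s, 0 <= s <= 1 -> Rabs (s - t) < delta ->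
         lr_norm_le r (seq_sub (gamma s) (gamma t)) eps).

Definition is_curve (r : R) (G : rset) : Prop :=
  exists gamma : R -> rseq, lr_continuous_on01 r gamma /\
    forall x, G x <-> exists t, 0 <= t <= 1 /\ x = gamma t.

Definition rectifiable_curve (r : R) (G : rset) : Prop :=
  is_curve r G /\ H1_finite r G.

(* The curve visits the dyadic coordinate blocks
   B_n = [2^n - 1, 2^(n+1) - 1) one at a time: during the parameter window
   [2^-(n+1), 2^-n] it runs from 0 to the point equal to h_n = 2^(-n/p) / (n+1) on
   B_n and to 0 elsewhere, and back.  That point has ℓ_r norm 2^(n/r - n/p) / (n+1).
   For r = q > p these norms decay geometrically, so cutting the first segments into
   short pieces and putting the rest into one small piece gives H^1_q < ∞.  For
   r = p they are harmonic: a cover by sets of diameter below h_m / 4 cannot meet two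
   of the first m segments, and laying the outer halves of these segments end to end
   on a line turns it into a cover of an interval of length (1/2) Σ_{n <= m} 1/(n+1).
   The first part holds because |x|_q <= |x|_p: every |x_k| is at most |x|_p. *)

From Stdlib Require Import Reals Lra Lia Classical ClassicalEpsilon.
Open Scope R_scope.

Lemma Rpower_gt0 x y : 0 < Rpower x y.
Proof. apply exp_pos. Qed.

Lemma rpow_ge0 a r : 0 <= rpow a r.
Proof. unfold rpow; destruct (Rlt_dec 0 a); [left; apply Rpower_gt0 | lra]. Qed.

Lemma rpow_Rpower a r : 0 < a -> rpow a r = Rpower a r.
Proof. intro Ha; unfold rpow; destruct (Rlt_dec 0 a); [reflexivity | lra]. Qed.

Lemma rpow_0l r : rpow 0 r = 0.
Proof. unfold rpow; destruct (Rlt_dec 0 0); lra. Qed.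

Lemma rpow_1l r : rpow 1 r = 1.
Proof.
  rewrite rpow_Rpower by lra. unfold Rpower. rewrite ln_1, Rmult_0_r. apply exp_0.
Qed.

Lemma rpow_lt r a b : 0 < r -> 0 <= a < b -> rpow a r < rpow b r.
Proof.
  intros Hr [[Ha | <-] Hab]; rewrite (rpow_Rpower b) by lra.
  - rewrite rpow_Rpower by lra. apply Rlt_Rpower_l; lra.
  - rewrite rpow_0l. apply Rpower_gt0.
Qed.

Lemma rpow_le r a b : 0 < r -> 0 <= a <= b -> rpow a r <= rpow b r.
Proof.
  intros Hr [Ha [Hab | <-]]; [left; apply rpow_lt; lra | lra].
Qed.

Lemma rpow_le_inv r a b : 0 < r -> 0 <= a -> 0 <= b -> rpow a r <= rpow b r -> a <= b.
Proof.
  intros Hr Ha Hb H. destruct (Rle_dec a b) as [| Hba]; [assumption |].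
  assert (rpow b r < rpow a r) by (apply rpow_lt; lra). lra.
Qed.

Lemma rpow_mult r a b : 0 <= a -> 0 <= b -> rpow (a * b) r = rpow a r * rpow b r.
Proof.
  intros [Ha | <-] [Hb | <-]; rewrite ?Rmult_0_l, ?Rmult_0_r, ?rpow_0l; try ring.
  rewrite !rpow_Rpower by (try apply Rmult_lt_0_compat; lra).
  symmetry; apply Rpower_mult_distr; lra.
Qed.

Lemma rpow_plus a r s : 0 <= a -> rpow a (r + s) = rpow a r * rpow a s.
Proof.
  intros [Ha | <-]; [rewrite !rpow_Rpower by lra; apply Rpower_plus | rewrite !rpow_0l; ring].
Qed.

Lemma rpow_le_base a r : 0 <= a <= 1 -> 1 <= r -> rpow a r <= a.
Proof.
  intros Ha Hr. replace r with (1 + (r - 1)) by ring.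
  destruct Ha as [[Ha | <-] Ha1]; [| rewrite rpow_0l; lra].
  rewrite rpow_plus, (rpow_Rpower a 1), Rpower_1 by lra.
  assert (rpow a (r - 1) <= 1).
  { destruct (Req_dec r 1) as [-> | Hr1].
    - rewrite Rminus_diag, rpow_Rpower, Rpower_O by lra. lra.
    - rewrite <- (rpow_1l (r - 1)) at 2. apply rpow_le; lra. }
  pose proof (rpow_ge0 a (r - 1)). nra.
Qed.

Lemma rpow_div_le x c r : 0 <= x -> 1 <= c -> 1 <= r -> rpow (x / c) r <= rpow x r / c.
Proof.
  intros Hx Hc Hr. assert (Hinv : 0 < / c <= 1).
  { split; [apply Rinv_0_lt_compat; lra | rewrite <- Rinv_1; apply Rinv_le_contravar; lra]. }
  unfold Rdiv. rewrite rpow_mult by lra.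
  pose proof (rpow_le_base (/ c) r ltac:(lra) Hr). pose proof (rpow_ge0 x r).
  apply Rmult_le_compat_l; lra.
Qed.

Lemma rpow_pow2_mult (n : nat) r y : 0 < r -> 0 <= y ->
  2 ^ n * rpow y r = rpow (Rpower 2 (INR n / r) * y) r.
Proof.
  intros Hr [Hy | <-]; [| rewrite Rmult_0_r, rpow_0l; ring].
  rewrite !rpow_Rpower by (try apply Rmult_lt_0_compat; try apply Rpower_gt0; lra).
  rewrite <- Rpower_mult_distr, Rpower_mult by (try apply Rpower_gt0; lra).
  replace (INR n / r * r) with (INR n) by (field; lra).
  rewrite Rpower_pow by lra. reflexivity.
Qed.

Lemma rpow_Rabs_sub_le a b r : 0 <= a -> 0 <= b -> 0 < r ->
  rpow (Rabs (a - b)) r <= rpow a r + rpow b r.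
Proof.
  intros Ha Hb Hr. pose proof (rpow_ge0 a r). pose proof (rpow_ge0 b r).
  assert (rpow (Rabs (a - b)) r <= rpow (Rmax a b) r); [| unfold Rmax in *; destruct Rle_dec; lra].
  apply rpow_le; [lra |]. split; [apply Rabs_pos |].
  unfold Rmax, Rabs; destruct Rle_dec, Rcase_abs; lra.
Qed.

Lemma Rdiv_lt_swap a x y : 0 < x -> 0 < y -> a / x < y -> a / y < x.
Proof.
  intros Hx Hy H. apply (Rmult_lt_compat_r x) in H; [| exact Hx].
  replace (a / x * x) with a in H by (field; lra).
  apply (Rmult_lt_reg_r y); [exact Hy |]. replace (a / y * y) with a by (field; lra). lra.
Qed.

Lemma inv_INR_succ_range n : 0 < / (INR n + 1) <= 1.
Proof.
  pose proof (pos_INR n). split; [apply Rinv_0_lt_compat; lra |].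
  rewrite <- Rinv_1. apply Rinv_le_contravar; lra.
Qed.

Lemma pow2_gt0 n : 0 < 2 ^ n.
Proof. apply pow_lt; lra. Qed.

Lemma pow2_lt_mono m n : (m < n)%nat -> 2 * 2 ^ m <= 2 ^ n.
Proof. intro H. change (2 * 2 ^ m) with (2 ^ S m). apply Rle_pow; [lra | lia]. Qed.

Lemma Rmax0_lipschitz a b : Rabs (Rmax 0 a - Rmax 0 b) <= Rabs (a - b).
Proof. unfold Rmax, Rabs. repeat destruct Rle_dec; repeat destruct Rcase_abs; lra. Qed.

Lemma ln_1_plus_lt x : 0 < x -> ln (1 + x) < x.
Proof.
  intro Hx. rewrite <- (ln_exp x) at 2. apply ln_increasing; [lra |]. apply exp_ineq1. lra.
Qed.

Lemma harmonic_ge_ln N : ln (INR N + 2) <= sum_f_R0 (fun n => / (INR n + 1)) N.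
Proof.
  induction N as [| N IH].
  - simpl. replace (0 + 2) with (1 + 1) by ring. replace (/ (0 + 1)) with 1 by field.
    pose proof (ln_1_plus_lt 1 ltac:(lra)). lra.
  - rewrite tech5, !S_INR. pose proof (pos_INR N).
    assert (Hinv : 0 < / (INR N + 2)) by (apply Rinv_0_lt_compat; lra).
    replace (INR N + 1 + 2) with ((INR N + 2) * (1 + / (INR N + 2))) by (field; lra).
    rewrite ln_mult by lra. pose proof (ln_1_plus_lt _ Hinv).
    replace (INR N + 1 + 1) with (INR N + 2) by ring. lra.
Qed.

Lemma ln_INR_unbounded X : exists N, X < ln (INR N + 2).
Proof.
  destruct (INR_unbounded (exp X)) as [N HN]. exists N.
  rewrite <- (ln_exp X). apply ln_increasing; [apply exp_pos | lra].
Qed.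

Definition in_range (a c k : nat) : bool := (a <=? k)%nat && (k <? a + c)%nat.

Lemma in_range_spec a c k : in_range a c k = true <-> (a <= k < a + c)%nat.
Proof. unfold in_range. rewrite Bool.andb_true_iff, Nat.leb_le, Nat.ltb_lt. tauto. Qed.

Lemma sum_indicator a c w K :
  sum_f_R0 (fun k => if in_range a c k then w else 0) K
  = INR (Nat.min (S K) (a + c) - a) * w.
Proof.
  induction K as [| K IH]; simpl sum_f_R0.
  - destruct (in_range a c 0) eqn:E; [apply in_range_spec in E | ].
    + replace (Nat.min 1 (a + c) - a)%nat with 1%nat by lia. simpl; ring.
    + destruct (Nat.eq_dec (Nat.min 1 (a + c) - a) 0) as [-> | Hne]; [simpl; ring |].
      exfalso. apply Bool.not_true_iff_false in E. apply E, in_range_spec. lia.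
  - rewrite IH. destruct (in_range a c (S K)) eqn:E; [apply in_range_spec in E |].
    + replace (Nat.min (S (S K)) (a + c) - a)%nat with (S (Nat.min (S K) (a + c) - a)) by lia.
      rewrite S_INR. ring.
    + assert (~ (a <= S K < a + c)%nat) by (rewrite <- in_range_spec; congruence).
      replace (Nat.min (S (S K)) (a + c) - a)%nat with (Nat.min (S K) (a + c) - a)%nat by lia.
      ring.
Qed.

Lemma sum_le_on_range a c w (f : nat -> R) K : 0 <= w ->
  (forall k, (a <= k < a + c)%nat -> f k <= w) ->
  (forall k, ~ (a <= k < a + c)%nat -> f k <= 0) ->
  sum_f_R0 f K <= INR c * w.
Proof.
  intros Hw Hin Hout.
  apply Rle_trans with (sum_f_R0 (fun k => if in_range a c k then w else 0) K).
  - apply sum_Rle. intros k _. destruct (in_range a c k) eqn:E.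
    + apply Hin, in_range_spec, E.
    + apply Hout. rewrite <- in_range_spec. congruence.
  - rewrite sum_indicator. apply Rmult_le_compat_r; [lra |]. apply le_INR. lia.
Qed.

Lemma sum_ge_on_range a c w (f : nat -> R) : 0 <= w ->
  (forall k, (a <= k < a + c)%nat -> w <= f k) -> (forall k, 0 <= f k) ->
  INR c * w <= sum_f_R0 f (a + c - 1).
Proof.
  intros Hw Hin Hpos.
  replace c with (Nat.min (S (a + c - 1)) (a + c) - a)%nat at 1 by lia.
  rewrite <- sum_indicator. apply sum_Rle. intros k _. destruct (in_range a c k) eqn:E.
  - apply Hin, in_range_spec, E.
  - apply Hpos.
Qed.

Lemma sum_f_R0_ge_term (f : nat -> R) k : (forall i, 0 <= f i) -> f k <= sum_f_R0 f k.
Proof.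
  intro Hf. destruct k as [| k]; simpl; [lra |].
  pose proof (cond_pos_sum f k Hf). lra.
Qed.

Lemma sum_f_R0_mono (d : nat -> R) m n : (forall i, 0 <= d i) -> (m <= n)%nat ->
  sum_f_R0 d m <= sum_f_R0 d n.
Proof.
  intros Hpos Hmn. destruct (Nat.eq_dec m n) as [-> | Hne]; [lra |].
  rewrite (tech2 d m n), <- (Rplus_0_r (sum_f_R0 d m)) at 1 by lia.
  apply Rplus_le_compat_l, cond_pos_sum. intro; apply Hpos.
Qed.

Lemma sum_f_R0_le_support (d : nat -> R) L I : (forall i, 0 <= d i) ->
  (forall i, (L < i)%nat -> d i = 0) -> sum_f_R0 d I <= sum_f_R0 d L.
Proof.
  intros Hpos Hzero. destruct (Nat.le_gt_cases I L) as [HIL | HLI].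
  - apply sum_f_R0_mono; assumption.
  - rewrite (tech2 d L I HLI), (sum_eq (fun i => d (S L + i)%nat) (fun _ => 0)), sum_cte
      by (intros; apply Hzero; lia).
    lra.
Qed.

Lemma sum_f_R0_div (f : nat -> R) K N : (1 <= K)%nat ->
  sum_f_R0 (fun i => f (i / K)%nat) (K * S N - 1) = INR K * sum_f_R0 f N.
Proof.
  intro HK. induction N as [| N IH].
  - rewrite (sum_eq _ (fun _ => f 0%nat)), sum_cte.
    + replace (S (K * 1 - 1)) with K by lia. simpl. ring.
    + intros i Hi. f_equal. apply Nat.div_small. lia.
  - rewrite (tech2 _ (K * S N - 1)) by nia. rewrite IH.
    rewrite (sum_eq (fun i => f ((S (K * S N - 1) + i) / K)%nat) (fun _ => f (S N))), sum_cte.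
    + replace (S (K * S (S N) - 1 - S (K * S N - 1))) with K by nia. simpl. ring.
    + intros i Hi. f_equal. symmetry. apply (Nat.div_unique _ _ _ i); nia.
Qed.

Lemma sum_f_R0_le_incr (f g : nat -> R) k N : (forall i, f i <= g i) -> (k <= N)%nat ->
  sum_f_R0 f N + (g k - f k) <= sum_f_R0 g N.
Proof.
  intros Hfg Hk. induction N as [| N IH].
  - replace k with 0%nat by lia. simpl. lra.
  - simpl. destruct (Nat.eq_dec k (S N)) as [-> | Hne].
    + pose proof (sum_Rle f g N (fun i _ => Hfg i)). lra.
    + specialize (IH ltac:(lia)). specialize (Hfg (S N)). lra.
Qed.

Definition overlap (a u v x : R) : R := Rmax 0 (Rmin v x - Rmax u a).

Lemma overlap_ge0 a u v x : 0 <= overlap a u v x.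
Proof. apply Rmax_l. Qed.

Lemma overlap_mono a u v x y : x <= y -> overlap a u v x <= overlap a u v y.
Proof. intros. unfold overlap, Rmax, Rmin. repeat destruct Rle_dec; lra. Qed.

Lemma overlap_incr a u v x y : u < x -> x <= y -> y < v -> a <= x ->
  overlap a u v y - overlap a u v x = y - x.
Proof. intros. unfold overlap, Rmax, Rmin. repeat destruct Rle_dec; lra. Qed.

Lemma overlap_le_length a u v x : overlap a u v x <= Rmax 0 (v - u).
Proof. unfold overlap, Rmax, Rmin. repeat destruct Rle_dec; lra. Qed.

(* A Heine-Borel argument: the supremum c of the points x for which finitely many
   of the intervals cover a length x - a of [a, x] cannot lie before b, since the
   interval around c pushes the covered length past c. *)
Lemma interval_length_le_cover (u v : nat -> R) a b : a <= b ->
  (forall t, a <= t <= b -> exists i, u i < t < v i) ->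
  exists N, b - a <= sum_f_R0 (fun i => Rmax 0 (v i - u i)) N.
Proof.
  intros Hab Hcov.
  set (covered x := exists N, x - a <= sum_f_R0 (fun i => overlap a (u i) (v i) x) N).
  set (E x := a <= x <= b /\ covered x).
  assert (Ea : E a).
  { split; [lra |]. exists 0%nat. simpl. pose proof (overlap_ge0 a (u 0%nat) (v 0%nat) a). lra. }
  destruct (completeness E) as [c [Hub Hlub]];
    [exists b; intros x [Hx _]; lra | exists a; exact Ea |].
  assert (Hac : a <= c) by (apply Hub, Ea).
  assert (Hcb : c <= b) by (apply Hlub; intros x [Hx _]; lra).
  destruct (Hcov c (conj Hac Hcb)) as [k [Hukc Hckv]].
  assert (Hx : exists x, E x /\ u k < x).
  { apply NNPP. intro Hnone. assert (c <= u k); [| lra].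
    apply Hlub. intros x Ex. apply Rnot_lt_le. intro. apply Hnone. eauto. }
  destruct Hx as [x [[Hxab [N HN]] Hux]].
  assert (Hxc : x <= c) by (apply Hub; split; [lra | exists N; exact HN]).
  set (y := Rmin b ((c + v k) / 2)).
  assert (Hy : c <= y <= b /\ y < v k) by (unfold y, Rmin; destruct Rle_dec; lra).
  assert (Hxy : x <= y) by lra.
  assert (Ey : covered y).
  { exists (Nat.max N k).
    pose proof (sum_f_R0_mono (fun i => overlap a (u i) (v i) x) N (Nat.max N k)
      (fun i => overlap_ge0 _ _ _ _) ltac:(lia)).
    pose proof (sum_f_R0_le_incr (fun i => overlap a (u i) (v i) x)
      (fun i => overlap a (u i) (v i) y) k (Nat.max N k)
      (fun i => overlap_mono _ _ _ _ _ Hxy) ltac:(lia)).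
    pose proof (overlap_incr a (u k) (v k) x y ltac:(lra) ltac:(lra) ltac:(lra) ltac:(lra)).
    simpl in *. lra. }
  assert (Hyc : y <= c) by (apply Hub; split; [lra | exact Ey]).
  replace b with y by (unfold y, Rmin in *; destruct Rle_dec; lra).
  destruct Ey as [N' HN']. exists N'. eapply Rle_trans; [exact HN' |].
  apply sum_Rle. intros i _. apply overlap_le_length.
Qed.

Lemma interval_length_le_diam_cover (A : nat -> R -> Prop) (d e : nat -> R) a b : a <= b ->
  (forall i, 0 <= d i) -> (forall i, 0 < e i) ->
  (forall i y y', A i y -> A i y' -> Rabs (y - y') <= d i) ->
  (forall y, a <= y <= b -> exists i, A i y) ->
  exists N, b - a <= 2 * sum_f_R0 d N + 2 * sum_f_R0 e N.
Proof.
  intros Hab Hd He Hdiam Hcov.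
  set (center i := epsilon (inhabits 0) (A i)).
  destruct (interval_length_le_cover (fun i => center i - d i - e i)
              (fun i => center i + d i + e i) a b Hab) as [N HN].
  - intros y Hy. destruct (Hcov y Hy) as [i Hi]. exists i.
    assert (Hc : A i (center i)) by (apply epsilon_spec; eauto).
    pose proof (Hdiam i y (center i) Hi Hc). pose proof (He i).
    unfold Rabs in *. destruct Rcase_abs; lra.
  - exists N. eapply Rle_trans; [exact HN |]. right.
    rewrite (sum_eq _ (fun i => d i * 2 + e i * 2)), sum_plus, <- !scal_sum; [ring |].
    intros i _. pose proof (Hd i). pose proof (He i). unfold Rmax. destruct Rle_dec; lra.
Qed.

(** * Monotonicity of the ℓ_r norms in r *)

Lemma lr_norm_le_coord r z d k : 0 < r -> lr_norm_le r z d -> Rabs (z k) <= d.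
Proof.
  intros Hr [Hd Hsum]. apply (rpow_le_inv r); auto using Rabs_pos.
  eapply Rle_trans; [| apply (Hsum k)].
  apply (sum_f_R0_ge_term (fun k => rpow (Rabs (z k)) r)). intro; apply rpow_ge0.
Qed.

Lemma lr_norm_le_mono p q x d : 0 < p -> p <= q -> lr_norm_le p x d -> lr_norm_le q x d.
Proof.
  intros Hp [Hpq | <-] Hx; [| exact Hx].
  assert (Hcoord : forall k, Rabs (x k) <= d) by (intro; eapply lr_norm_le_coord; eauto).
  destruct Hx as [Hd Hsum]. split; [exact Hd |]. intro N.
  replace q with (p + (q - p)) by ring. rewrite rpow_plus by lra.
  apply Rle_trans with (sum_f_R0 (fun k => rpow (Rabs (x k)) p * rpow d (q - p)) N).
  - apply sum_Rle. intros k _. rewrite rpow_plus by apply Rabs_pos.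
    apply Rmult_le_compat_l; [apply rpow_ge0 |].
    apply rpow_le; [lra | split; [apply Rabs_pos | apply Hcoord]].
  - rewrite <- scal_sum, Rmult_comm. apply Rmult_le_compat_r; [apply rpow_ge0 | apply Hsum].
Qed.

Lemma in_lr_mono p q x : 0 < p -> p <= q -> in_lr p x -> in_lr q x.
Proof. intros Hp Hpq [d Hd]. exists d. exact (lr_norm_le_mono p q x d Hp Hpq Hd). Qed.

Lemma lr_continuous_on01_mono p q gamma : 0 < p -> p <= q ->
  lr_continuous_on01 p gamma -> lr_continuous_on01 q gamma.
Proof.
  intros Hp Hpq [Hin Hcont]. split.
  - intros t Ht. exact (in_lr_mono p q _ Hp Hpq (Hin t Ht)).
  - intros t Ht eps Heps. destruct (Hcont t Ht eps Heps) as [delta [Hdelta Hclose]].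
    exists delta. split; [exact Hdelta |].
    intros s Hs Hst. exact (lr_norm_le_mono p q _ _ Hp Hpq (Hclose s Hs Hst)).
Qed.

Lemma H1_le_mono p q E M : 0 < p -> p <= q -> H1_le p E M -> H1_le q E M.
Proof.
  intros Hp Hpq HM delta eps Hdelta Heps.
  destruct (HM delta eps Hdelta Heps) as [C [d [Hcov [Hd [Hdiam Hsum]]]]].
  exists C, d. split; [exact Hcov | split; [exact Hd | split; [| exact Hsum]]].
  intros i x y Hx Hy. exact (lr_norm_le_mono p q _ _ Hp Hpq (Hdiam i x y Hx Hy)).
Qed.

Lemma rectifiable_curve_mono p q G : 0 < p -> p <= q ->
  rectifiable_curve p G -> rectifiable_curve q G.
Proof.
  intros Hp Hpq [[gamma [Hgamma HG]] [M HM]]. split.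
  - exists gamma. split; [exact (lr_continuous_on01_mono p q gamma Hp Hpq Hgamma) | exact HG].
  - exists M. exact (H1_le_mono p q G M Hp Hpq HM).
Qed.

Definition block_of (k : nat) : nat := Nat.log2 (S k).

Lemma pow2_ge1 n : (1 <= 2 ^ n)%nat.
Proof. induction n; simpl; lia. Qed.

Lemma block_of_spec k n : block_of k = n <-> (2 ^ n - 1 <= k < 2 ^ n - 1 + 2 ^ n)%nat.
Proof.
  pose proof (pow2_ge1 n). unfold block_of. split.
  - intros <-. pose proof (Nat.log2_spec (S k) ltac:(lia)) as Hs.
    rewrite Nat.pow_succ_r' in Hs. lia.
  - intro Hk. apply Nat.log2_unique; [lia |]. rewrite Nat.pow_succ_r'. lia.
Qed.

Lemma block_of_le k N : (block_of k <= N)%nat <-> (k < 2 ^ S N - 1)%nat.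
Proof.
  unfold block_of. pose proof (Nat.log2_lt_pow2 (S k) (S N) ltac:(lia)).
  pose proof (pow2_ge1 (S N)). lia.
Qed.

Lemma INR_pow2 n : INR (2 ^ n) = 2 ^ n.
Proof. rewrite pow_INR. reflexivity. Qed.

Lemma sum_block_le n w (f : nat -> R) K : 0 <= w ->
  (forall k, block_of k = n -> f k <= w) -> (forall k, block_of k <> n -> f k <= 0) ->
  sum_f_R0 f K <= 2 ^ n * w.
Proof.
  intros Hw Hin Hout. rewrite <- INR_pow2.
  apply (sum_le_on_range (2 ^ n - 1)); [exact Hw | |].
  - intros k Hk. apply Hin, block_of_spec, Hk.
  - intros k Hk. apply Hout. rewrite block_of_spec. exact Hk.
Qed.

Lemma sum_block_ge n w (f : nat -> R) : 0 <= w ->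
  (forall k, block_of k = n -> w <= f k) -> (forall k, 0 <= f k) ->
  2 ^ n * w <= sum_f_R0 f (2 ^ n - 1 + 2 ^ n - 1).
Proof.
  intros Hw Hin Hpos. rewrite <- INR_pow2.
  apply sum_ge_on_range; [exact Hw | | exact Hpos].
  intros k Hk. apply Hin, block_of_spec, Hk.
Qed.

(** * The curve *)

(* The hat function of the window [2^-(n+1), 2^-n], with peak 1 at its midpoint. *)
Definition tent (n : nat) (t : R) : R := Rmax 0 (1 - Rabs (2 ^ (n + 2) * t - 3)).

Definition block_height (p : R) (n : nat) : R := Rpower 2 (- INR n / p) * / (INR n + 1).

Definition curve (p : R) (t : R) : rseq :=
  fun k => tent (block_of k) t * block_height p (block_of k).

Definition curve_image (p : R) : rset := fun x => exists t, 0 <= t <= 1 /\ x = curve p t.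

Definition block_norm (r p : R) (n : nat) : R := Rpower 2 (INR n / r) * block_height p n.

Lemma tent_range n t : 0 <= tent n t <= 1.
Proof.
  unfold tent. pose proof (Rabs_pos (2 ^ (n + 2) * t - 3)).
  split; [apply Rmax_l | apply Rmax_lub; lra].
Qed.

Lemma tent_gt0_window n t : 0 < tent n t -> 2 < 2 ^ (n + 2) * t < 4.
Proof. unfold tent, Rmax, Rabs. destruct Rle_dec, Rcase_abs; lra. Qed.

Lemma tent_eq0 n t : 2 ^ (n + 2) * t <= 2 \/ 4 <= 2 ^ (n + 2) * t -> tent n t = 0.
Proof. unfold tent, Rmax, Rabs. destruct Rle_dec, Rcase_abs; lra. Qed.

Lemma tent_other_window n m t : 2 <= 2 ^ (n + 2) * t <= 4 -> m <> n -> tent m t = 0.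
Proof.
  intros Ht Hmn. apply tent_eq0.
  assert (0 <= t) by (pose proof (pow2_gt0 (n + 2)); nra).
  destruct (Nat.lt_gt_cases m n) as [[Hlt | Hgt] _]; [exact Hmn | left | right].
  - assert (2 * 2 ^ (m + 2) <= 2 ^ (n + 2)) by (apply pow2_lt_mono; lia). nra.
  - assert (2 * 2 ^ (n + 2) <= 2 ^ (m + 2)) by (apply pow2_lt_mono; lia). nra.
Qed.

Lemma tent_lipschitz n s t :
  Rabs (tent n s - tent n t) <= Rabs (2 ^ (n + 2) * s - 2 ^ (n + 2) * t).
Proof.
  unfold tent. eapply Rle_trans; [apply Rmax0_lipschitz |].
  set (c := 2 ^ (n + 2)).
  replace (1 - Rabs (c * s - 3) - (1 - Rabs (c * t - 3)))
    with (Rabs (c * t - 3) - Rabs (c * s - 3)) by ring.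
  eapply Rle_trans; [apply Rabs_triang_inv2 |].
  rewrite Rabs_minus_sym. right. f_equal. ring.
Qed.

Lemma block_height_gt0 p n : 0 < block_height p n.
Proof.
  apply Rmult_lt_0_compat; [apply Rpower_gt0 |].
  apply Rinv_0_lt_compat. pose proof (pos_INR n). lra.
Qed.

Lemma block_height_antitone p m n : 0 < p -> (m <= n)%nat -> block_height p n <= block_height p m.
Proof.
  intros Hp Hmn. pose proof (le_INR _ _ Hmn). pose proof (pos_INR m).
  apply Rmult_le_compat; [left; apply Rpower_gt0 | left; apply inv_INR_succ_range | |].
  - apply Rle_Rpower; [lra |]. unfold Rdiv. apply Rmult_le_compat_r; [| lra].
    left. apply Rinv_0_lt_compat. lra.
  - apply Rinv_le_contravar; lra.
Qed.

Lemma block_height_le1 p n : 0 < p -> block_height p n <= 1.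
Proof.
  intro Hp. eapply Rle_trans; [apply (block_height_antitone p 0 n Hp); lia |].
  unfold block_height. replace (- INR 0 / p) with 0 by (simpl; field; lra).
  rewrite Rpower_O; simpl; lra.
Qed.

Lemma block_norm_eq r p n : 0 < p -> 0 < r ->
  block_norm r p n = Rpower 2 (INR n * (/ r - / p)) * / (INR n + 1).
Proof.
  intros Hp Hr. unfold block_norm, block_height. rewrite <- Rmult_assoc, <- Rpower_plus.
  do 2 f_equal. field. lra.
Qed.

Lemma block_norm_diag p n : 0 < p -> block_norm p p n = / (INR n + 1).
Proof.
  intro Hp. rewrite block_norm_eq, Rminus_diag, Rmult_0_r, Rpower_O by lra. ring.
Qed.

Lemma block_norm_gt0 r p n : 0 < block_norm r p n.
Proof. apply Rmult_lt_0_compat; [apply Rpower_gt0 | apply block_height_gt0]. Qed.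

Lemma block_norm_le_harmonic p q n : 0 < p -> p <= q -> block_norm q p n <= / (INR n + 1).
Proof.
  intros Hp Hpq. rewrite block_norm_eq by lra.
  assert (Rpower 2 (INR n * (/ q - / p)) <= 1).
  { rewrite <- (Rpower_O 2) by lra. apply Rle_Rpower; [lra |].
    assert (/ q <= / p) by (apply Rinv_le_contravar; lra). pose proof (pos_INR n). nra. }
  pose proof (inv_INR_succ_range n).
  pose proof (Rpower_gt0 2 (INR n * (/ q - / p))). nra.
Qed.

Lemma block_norm_le_geometric p q n : 0 < p -> p <= q ->
  block_norm q p n <= Rpower 2 (/ q - / p) ^ n.
Proof.
  intros Hp Hpq. rewrite block_norm_eq, <- Rpower_pow, Rpower_mult by (try apply Rpower_gt0; lra).
  replace ((/ q - / p) * INR n) with (INR n * (/ q - / p)) by ring.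
  pose proof (inv_INR_succ_range n).
  pose proof (Rpower_gt0 2 (INR n * (/ q - / p))). nra.
Qed.

Lemma lr_sum_block_le r p n a (z : rseq) K : 0 < r -> 0 <= a ->
  (forall k, block_of k = n -> Rabs (z k) <= a * block_height p n) ->
  (forall k, block_of k <> n -> z k = 0) ->
  sum_f_R0 (fun k => rpow (Rabs (z k)) r) K <= rpow (a * block_norm r p n) r.
Proof.
  intros Hr Ha Hin Hout. pose proof (block_height_gt0 p n).
  replace (a * block_norm r p n) with (Rpower 2 (INR n / r) * (a * block_height p n))
    by (unfold block_norm; ring).
  rewrite <- rpow_pow2_mult by (try apply Rmult_le_pos; lra).
  apply sum_block_le; [apply rpow_ge0 | |].
  - intros k Hk. apply rpow_le; [exact Hr |]. split; [apply Rabs_pos | subst; auto].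
  - intros k Hk. rewrite Hout, Rabs_R0, rpow_0l by exact Hk. lra.
Qed.

Lemma lr_sum_block_ge r p n a (z : rseq) : 0 < r -> 0 <= a ->
  (forall k, block_of k = n -> a * block_height p n <= Rabs (z k)) ->
  rpow (a * block_norm r p n) r
  <= sum_f_R0 (fun k => rpow (Rabs (z k)) r) (2 ^ n - 1 + 2 ^ n - 1).
Proof.
  intros Hr Ha Hin. pose proof (block_height_gt0 p n).
  replace (a * block_norm r p n) with (Rpower 2 (INR n / r) * (a * block_height p n))
    by (unfold block_norm; ring).
  rewrite <- rpow_pow2_mult by (try apply Rmult_le_pos; lra).
  apply sum_block_ge; [apply rpow_ge0 | | intro; apply rpow_ge0].
  intros k Hk. apply rpow_le; [exact Hr |]. split; [apply Rmult_le_pos; lra | subst; auto].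
Qed.

Lemma curve_range p t k : 0 <= curve p t k <= block_height p (block_of k).
Proof.
  unfold curve. pose proof (tent_range (block_of k) t).
  pose proof (block_height_gt0 p (block_of k)). nra.
Qed.

Lemma curve_block_support p t : exists n, forall k, block_of k <> n -> curve p t k = 0.
Proof.
  unfold curve. destruct (classic (exists n, 0 < tent n t)) as [[n Hn] | Hnone].
  - exists n. intros k Hk. apply tent_gt0_window in Hn.
    rewrite (tent_other_window n) by (lra || exact Hk). ring.
  - exists 0%nat. intros k _. destruct (tent_range (block_of k) t) as [[Hpos | Hzero] _].
    + exfalso. eauto.
    + rewrite <- Hzero. ring.
Qed.

Definition curve_tail_rpow (p q t : R) (N k : nat) : R :=
  if (block_of k <=? N)%nat then 0 else rpow (Rabs (curve p t k)) q.

Lemma curve_tail_lr_sum_le p q t N K : 0 < p -> p <= q ->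
  sum_f_R0 (curve_tail_rpow p q t N) K <= rpow (/ (INR N + 2)) q.
Proof.
  intros Hp Hpq. destruct (curve_block_support p t) as [n Hn].
  assert (Hpos : 0 < / (INR N + 2)) by (apply Rinv_0_lt_compat; pose proof (pos_INR N); lra).
  destruct (Nat.le_gt_cases n N) as [HnN | HnN].
  - apply Rle_trans with (INR 0 * 0); [| simpl; rewrite Rmult_0_l; apply rpow_ge0].
    apply (sum_le_on_range 0 0); [lra | lia |]. intros k _. unfold curve_tail_rpow.
    destruct (Nat.leb_spec (block_of k) N); [lra |].
    rewrite Hn, Rabs_R0, rpow_0l by lia. lra.
  - apply Rle_trans with (sum_f_R0 (fun k => rpow (Rabs (curve p t k)) q) K).
    { apply sum_Rle. intros k _. unfold curve_tail_rpow.
      destruct (block_of k <=? N)%nat; [apply rpow_ge0 | lra]. }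
    eapply Rle_trans; [apply (lr_sum_block_le q p n 1); [lra | lra | | exact Hn] |].
    + intros k Hk. rewrite Rabs_right, Rmult_1_l, <- Hk by apply Rle_ge, curve_range.
      apply curve_range.
    + rewrite Rmult_1_l. apply rpow_le; [lra |]. split; [left; apply block_norm_gt0 |].
      apply Rle_trans with (/ (INR n + 1)); [apply block_norm_le_harmonic; lra |].
      pose proof (pos_INR N). apply Rinv_le_contravar; [lra |].
      apply le_INR in HnN. rewrite S_INR in HnN. lra.
Qed.

Lemma curve_head_eq0 p t N k : 0 <= t -> 2 ^ (N + 2) * t <= 2 -> (block_of k <= N)%nat ->
  curve p t k = 0.
Proof.
  intros Ht HtN Hk. unfold curve. rewrite tent_eq0; [ring | left].
  assert (2 ^ (block_of k + 2) <= 2 ^ (N + 2)) by (apply Rle_pow; [lra | lia]). nra.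
Qed.

Lemma curve_lr_norm_le1 p t : 0 < p -> lr_norm_le p (curve p t) 1.
Proof.
  intro Hp. split; [lra |]. intro K. destruct (curve_block_support p t) as [n Hn].
  eapply Rle_trans; [apply (lr_sum_block_le p p n 1); [lra | lra | | exact Hn] |].
  - intros k Hk. rewrite Rabs_right, Rmult_1_l, <- Hk by apply Rle_ge, curve_range.
    apply curve_range.
  - rewrite Rmult_1_l, block_norm_diag by lra. apply rpow_le; [lra |].
    pose proof (inv_INR_succ_range n). lra.
Qed.

Lemma curve_coord_lipschitz p s t k : 0 < p ->
  Rabs (curve p s k - curve p t k) <= 2 ^ (block_of k + 2) * Rabs (s - t).
Proof.
  intro Hp. unfold curve. rewrite <- Rmult_minus_distr_r, Rabs_mult.
  rewrite (Rabs_right (block_height p _)) by (left; apply block_height_gt0).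
  pose proof (block_height_le1 p (block_of k) Hp). pose proof (block_height_gt0 p (block_of k)).
  pose proof (tent_lipschitz (block_of k) s t) as Hlip.
  rewrite <- Rmult_minus_distr_l, Rabs_mult, (Rabs_right (2 ^ _)) in Hlip
    by (left; apply pow2_gt0).
  pose proof (Rabs_pos (tent (block_of k) s - tent (block_of k) t)). nra.
Qed.

(* The first N + 1 blocks move Lipschitz-continuously; the remaining ones are
   uniformly small. *)
Lemma curve_diff_lr_sum_le p s t N w K : 1 < p ->
  2 ^ (N + 2) * Rabs (s - t) <= w ->
  sum_f_R0 (fun k => rpow (Rabs (curve p s k - curve p t k)) p) K
  <= INR (2 ^ S N - 1) * rpow w p + 2 * rpow (/ (INR N + 2)) p.
Proof.
  intros Hp Hw.
  set (head k := if (block_of k <=? N)%nat then rpow w p else 0).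
  apply Rle_trans with
    (sum_f_R0 (fun k => head k + (curve_tail_rpow p p s N k + curve_tail_rpow p p t N k)) K).
  - apply sum_Rle. intros k _. unfold head, curve_tail_rpow.
    destruct (Nat.leb_spec (block_of k) N) as [Hk | Hk].
    + assert (2 ^ (block_of k + 2) <= 2 ^ (N + 2)) by (apply Rle_pow; [lra | lia]).
      pose proof (curve_coord_lipschitz p s t k ltac:(lra)). pose proof (Rabs_pos (s - t)).
      rewrite Rplus_0_r, Rplus_0_r. apply rpow_le; [lra |].
      split; [apply Rabs_pos | nra].
    + rewrite Rplus_0_l, (Rabs_right (curve p s k)), (Rabs_right (curve p t k))
        by apply Rle_ge, curve_range.
      apply rpow_Rabs_sub_le; [apply curve_range | apply curve_range | lra].
  - rewrite !sum_plus.
    pose proof (curve_tail_lr_sum_le p p s N K ltac:(lra) ltac:(lra)).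
    pose proof (curve_tail_lr_sum_le p p t N K ltac:(lra) ltac:(lra)).
    assert (sum_f_R0 head K <= INR (2 ^ S N - 1) * rpow w p); [| lra].
    pose proof (rpow_ge0 w p).
    apply (sum_le_on_range 0); [lra | |]; intros k Hk; unfold head;
      destruct (Nat.leb_spec (block_of k) N) as [HkN | HkN]; try lra.
    apply block_of_le in HkN. lia.
Qed.

Lemma curve_lr_continuous p : 1 < p -> lr_continuous_on01 p (curve p).
Proof.
  intro Hp. split; [intros t _; exists 1; apply curve_lr_norm_le1; lra |].
  intros t _ eps Heps. destruct (INR_unbounded (4 / eps)) as [N HN].
  set (P := 2 ^ S N). assert (HP : 1 <= P) by (apply pow_R1_Rle; lra).
  set (w := eps / (2 * P)). pose proof (pow2_gt0 (N + 2)).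
  exists (w / 2 ^ (N + 2)). split; [unfold w; apply Rdiv_lt_0_compat; [| lra];
    apply Rdiv_lt_0_compat; lra |].
  intros s _ Hst. split; [lra |]. intro K.
  eapply Rle_trans; [apply (curve_diff_lr_sum_le p s t N w K Hp) |].
  { apply (Rmult_lt_compat_l (2 ^ (N + 2))) in Hst; [| lra].
    replace (2 ^ (N + 2) * (w / 2 ^ (N + 2))) with w in Hst by (field; lra). lra. }
  assert (Hhead : INR (2 ^ S N - 1) * rpow w p <= rpow eps p / 2).
  { assert (INR (2 ^ S N - 1) <= P) by (unfold P; rewrite <- INR_pow2; apply le_INR; lia).
    assert (rpow w p <= rpow eps p / (2 * P)) by (apply rpow_div_le; lra).
    pose proof (rpow_ge0 w p). pose proof (pos_INR (2 ^ S N - 1)).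
    apply Rle_trans with (P * (rpow eps p / (2 * P))); [nra |].
    right. field. lra. }
  assert (Htail : rpow (/ (INR N + 2)) p <= rpow eps p / 4).
  { eapply Rle_trans; [apply (rpow_le p _ (eps / 4)); [lra |] |
      apply rpow_div_le; lra].
    assert (0 < INR N + 2) by (pose proof (pos_INR N); lra).
    pose proof (Rdiv_lt_swap 4 eps (INR N + 2) Heps ltac:(lra) ltac:(lra)).
    split; [left; apply Rinv_0_lt_compat |]; lra. }
  lra.
Qed.

(** * Finite length in ℓ_q for q > p *)

Lemma curve_tail_diam p q t t' N : 0 < p -> p <= q -> 1 <= q ->
  0 <= t -> 2 ^ (N + 2) * t <= 2 -> 0 <= t' -> 2 ^ (N + 2) * t' <= 2 ->
  lr_norm_le q (seq_sub (curve p t) (curve p t')) (2 / (INR N + 2)).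
Proof.
  intros Hp Hpq Hq Ht HtN Ht' Ht'N. pose proof (pos_INR N).
  split; [left; apply Rdiv_lt_0_compat; lra |]. intro K. unfold seq_sub.
  apply Rle_trans with (sum_f_R0 (fun k => curve_tail_rpow p q t N k
                                         + curve_tail_rpow p q t' N k) K).
  - apply sum_Rle. intros k _. unfold curve_tail_rpow.
    destruct (Nat.leb_spec (block_of k) N).
    + rewrite !(curve_head_eq0 p _ N k) by assumption.
      rewrite Rminus_diag, Rabs_R0, rpow_0l. lra.
    + rewrite (Rabs_right (curve p t k)), (Rabs_right (curve p t' k))
        by apply Rle_ge, curve_range.
      apply rpow_Rabs_sub_le; [apply curve_range | apply curve_range | lra].
  - rewrite sum_plus.
    pose proof (curve_tail_lr_sum_le p q t N K Hp Hpq).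
    pose proof (curve_tail_lr_sum_le p q t' N K Hp Hpq).
    unfold Rdiv. rewrite rpow_mult, (rpow_Rpower 2) by (try left; try apply Rinv_0_lt_compat; lra).
    assert (2 <= Rpower 2 q) by (rewrite <- (Rpower_1 2) at 1 by lra; apply Rle_Rpower; lra).
    pose proof (rpow_ge0 (/ (INR N + 2)) q). nra.
Qed.

Lemma curve_window_diam p q n c t t' : 0 < q -> 0 <= c ->
  2 <= 2 ^ (n + 2) * t <= 4 -> 2 <= 2 ^ (n + 2) * t' <= 4 ->
  Rabs (2 ^ (n + 2) * t - 2 ^ (n + 2) * t') <= c ->
  lr_norm_le q (seq_sub (curve p t) (curve p t')) (c * block_norm q p n).
Proof.
  intros Hq Hc Ht Ht' Htt'. pose proof (block_norm_gt0 q p n). pose proof (block_height_gt0 p n).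
  split; [apply Rmult_le_pos; lra |]. intro K.
  apply (lr_sum_block_le q p n c); [exact Hq | exact Hc | |].
  - intros k Hk. unfold seq_sub, curve. rewrite Hk, <- Rmult_minus_distr_r, Rabs_mult.
    rewrite (Rabs_right (block_height p n)) by lra.
    apply Rmult_le_compat_r; [lra |]. eapply Rle_trans; [apply tent_lipschitz | exact Htt'].
  - intros k Hk. unfold seq_sub, curve.
    rewrite (tent_other_window n (block_of k) t), (tent_other_window n (block_of k) t') by auto.
    ring.
Qed.

Lemma sum_block_norm_le_geometric p q N : 0 < p -> p < q ->
  sum_f_R0 (block_norm q p) N <= / (1 - Rpower 2 (/ q - / p)).
Proof.
  intros Hp Hpq. set (rho := Rpower 2 (/ q - / p)).
  assert (Hrho : 0 < rho < 1).
  { split; [apply Rpower_gt0 |]. unfold rho. rewrite <- (Rpower_O 2) by lra.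
    apply Rpower_lt; [lra |]. assert (/ q < / p) by (apply Rinv_lt_contravar; nra). lra. }
  apply Rle_trans with (sum_f_R0 (fun n => rho ^ n) N).
  - apply sum_Rle. intros n _. apply block_norm_le_geometric; lra.
  - rewrite tech3 by lra. pose proof (pow_lt rho (S N) ltac:(lra)).
    unfold Rdiv. pose proof (Rinv_0_lt_compat (1 - rho) ltac:(lra)). nra.
Qed.

Lemma window_search N t : 2 <= 2 ^ (N + 2) * t -> t <= 1 ->
  exists n, (n <= N)%nat /\ 2 <= 2 ^ (n + 2) * t <= 4.
Proof.
  induction N as [| N IH]; intros Hlow Ht.
  - exists 0%nat. simpl in *. split; [lia | lra].
  - destruct (Rle_dec 2 (2 ^ (N + 2) * t)) as [HN | HN].
    + destruct (IH HN Ht) as [n [Hn Hwin]]. exists n. split; [lia | exact Hwin].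
    + exists (S N). split; [lia |]. replace (S N + 2)%nat with (S (N + 2)) in * by lia.
      simpl in *. lra.
Qed.

Lemma grid_search c u m : 0 < c -> (1 <= m)%nat -> 0 <= u <= c * INR m ->
  exists r, (r < m)%nat /\ c * INR r <= u <= c * (INR r + 1).
Proof.
  intros Hc. induction m as [| m IH]; intros Hm Hu; [lia |].
  destruct (Nat.eq_dec m 0) as [-> | Hm0].
  - exists 0%nat. simpl in *. split; [lia | lra].
  - destruct (Rle_dec u (c * INR m)) as [Hum | Hum].
    + destruct IH as [r [Hr Hru]]; [lia | lra |]. exists r. split; [lia | exact Hru].
    + exists m. rewrite S_INR in Hu. split; [lia | lra].
Qed.

Definition window_piece (p : R) (n : nat) (a b : R) : rset :=
  fun x => exists t, 0 <= t <= 1 /\ a <= 2 ^ (n + 2) * t - 2 <= b /\ x = curve p t.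

Definition tail_piece (p : R) (N : nat) : rset :=
  fun x => exists t, 0 <= t <= 1 /\ 2 ^ (N + 2) * t <= 2 /\ x = curve p t.

(* Piece [i < K (N + 1)] is the [i mod K]-th of K equal parameter intervals of
   window [i / K]; piece [K (N + 1)] is everything before window N. *)
Definition curve_cover (p : R) (K N i : nat) : rset :=
  if (i <? K * S N)%nat then
    window_piece p (i / K) (2 / INR K * INR (i mod K)) (2 / INR K * (INR (i mod K) + 1))
  else if (i =? K * S N)%nat then tail_piece p N
  else fun _ => False.

Definition curve_cover_diam (q p : R) (K N i : nat) : R :=
  if (i <? K * S N)%nat then 2 / INR K * block_norm q p (i / K)
  else if (i =? K * S N)%nat then 2 / (INR N + 2)
  else 0.

Lemma curve_cover_covers p K N x : (1 <= K)%nat -> curve_image p x ->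
  exists i, curve_cover p K N i x.
Proof.
  intros HK [t [Ht ->]]. unfold curve_cover.
  destruct (Rle_dec (2 ^ (N + 2) * t) 2) as [Htail | Hwin].
  - exists (K * S N)%nat. rewrite Nat.ltb_irrefl, Nat.eqb_refl. exists t. auto.
  - destruct (window_search N t) as [n [HnN Hn]]; [lra | lra |].
    assert (HK0 : 0 < INR K) by (apply lt_0_INR; lia).
    destruct (grid_search (2 / INR K) (2 ^ (n + 2) * t - 2) K) as [r [Hr Hu]];
      [apply Rdiv_lt_0_compat; lra | exact HK | split; [lra | field_simplify; lra] |].
    exists (K * n + r)%nat.
    replace (K * n + r <? K * S N)%nat with true by (symmetry; apply Nat.ltb_lt; nia).
    replace ((K * n + r) / K)%nat with n by (apply (Nat.div_unique _ _ _ r); lia).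
    replace ((K * n + r) mod K)%nat with r by (apply (Nat.mod_unique _ _ n); lia).
    exists t. auto.
Qed.

Lemma curve_cover_small p q K N i x y : 0 < p -> p <= q -> 1 <= q -> (1 <= K)%nat ->
  curve_cover p K N i x -> curve_cover p K N i y ->
  lr_norm_le q (seq_sub x y) (curve_cover_diam q p K N i).
Proof.
  intros Hp Hpq Hq HK. unfold curve_cover, curve_cover_diam.
  destruct (Nat.ltb_spec i (K * S N)) as [Hi | Hi].
  - intros [t [Ht [Hu ->]]] [t' [Ht' [Hu' ->]]].
    assert (HK0 : 0 < INR K) by (apply lt_0_INR; lia).
    set (c := 2 / INR K) in *. assert (Hc : 0 < c) by (apply Rdiv_lt_0_compat; lra).
    assert (Hlow : 0 <= c * INR (i mod K)) by (apply Rmult_le_pos; [lra | apply pos_INR]).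
    assert (Hhigh : c * (INR (i mod K) + 1) <= 2).
    { replace 2 with (c * INR K) by (unfold c; field; lra). apply Rmult_le_compat_l; [lra |].
      rewrite <- S_INR. apply le_INR. pose proof (Nat.mod_upper_bound i K). lia. }
    apply curve_window_diam; [lra | lra | lra | lra |].
    unfold Rabs; destruct Rcase_abs; lra.
  - destruct (Nat.eqb_spec i (K * S N)); [| tauto].
    intros [t [Ht [HtN ->]]] [t' [Ht' [Ht'N ->]]]. apply curve_tail_diam; lra.
Qed.

Lemma curve_cover_diam_bound q p K N i delta : 0 < p -> p <= q -> (1 <= K)%nat ->
  2 / INR K <= delta -> 2 / (INR N + 2) <= delta -> 0 <= curve_cover_diam q p K N i <= delta.
Proof.
  intros Hp Hpq HK HKd HNd. assert (HK0 : 0 < INR K) by (apply lt_0_INR; lia).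
  pose proof (pos_INR N). unfold curve_cover_diam.
  destruct (i <? K * S N)%nat; [| destruct (i =? K * S N)%nat].
  - pose proof (block_norm_le_harmonic p q (i / K) Hp Hpq).
    pose proof (inv_INR_succ_range (i / K)). pose proof (block_norm_gt0 q p (i / K)).
    assert (0 < 2 / INR K) by (apply Rdiv_lt_0_compat; lra). nra.
  - split; [apply Rlt_le, Rdiv_lt_0_compat |]; lra.
  - split; [lra |]. apply Rle_trans with (2 / (INR N + 2)); [| exact HNd].
    apply Rlt_le, Rdiv_lt_0_compat; lra.
Qed.

Lemma curve_cover_diam_sum q p K N I : 0 < p -> p < q -> (1 <= K)%nat ->
  sum_f_R0 (curve_cover_diam q p K N) I <= 2 / (1 - Rpower 2 (/ q - / p)) + 2 / (INR N + 2).
Proof.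
  intros Hp Hpq HK. assert (HK0 : 0 < INR K) by (apply lt_0_INR; lia).
  pose proof (pos_INR N).
  eapply Rle_trans; [apply (sum_f_R0_le_support _ (K * S N)) |].
  { intro i. apply (curve_cover_diam_bound q p K N i (Rmax (2 / INR K) (2 / (INR N + 2))));
      auto using Rmax_l, Rmax_r; lra. }
  { intros i Hi. unfold curve_cover_diam.
    replace (i <? K * S N)%nat with false by (symmetry; apply Nat.ltb_ge; lia).
    replace (i =? K * S N)%nat with false by (symmetry; apply Nat.eqb_neq; lia). reflexivity. }
  assert (Hlast : curve_cover_diam q p K N (K * S N) = 2 / (INR N + 2)).
  { unfold curve_cover_diam. rewrite Nat.ltb_irrefl, Nat.eqb_refl. reflexivity. }
  assert (Hwindows : sum_f_R0 (curve_cover_diam q p K N) (K * S N - 1)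
                     = INR K * sum_f_R0 (fun n => block_norm q p n * (2 / INR K)) N).
  { rewrite <- sum_f_R0_div by exact HK. apply sum_eq. intros i Hi. unfold curve_cover_diam.
    replace (i <? K * S N)%nat with true by (symmetry; apply Nat.ltb_lt; nia). ring. }
  replace (K * S N)%nat with (S (K * S N - 1)) by nia. rewrite tech5.
  replace (S (K * S N - 1)) with (K * S N)%nat by nia.
  rewrite Hlast, Hwindows, <- scal_sum.
  replace (INR K * (2 / INR K * sum_f_R0 (block_norm q p) N))
    with (2 * sum_f_R0 (block_norm q p) N) by (field; lra).
  pose proof (sum_block_norm_le_geometric p q N Hp Hpq). unfold Rdiv at 1. lra.
Qed.

Lemma curve_image_H1_finite p q : 1 < p -> p < q -> H1_finite q (curve_image p).
Proof.
  intros Hp Hpq. exists (2 / (1 - Rpower 2 (/ q - / p))). intros delta eps Hdelta Heps.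
  destruct (INR_unbounded (2 / delta)) as [K HK].
  destruct (INR_unbounded (2 / Rmin delta eps)) as [N HN].
  assert (Hmin : 0 < Rmin delta eps) by (apply Rmin_glb_lt; lra).
  assert (HK1 : (1 <= K)%nat).
  { destruct K; [| lia]. simpl in HK.
    assert (0 < 2 / delta) by (apply Rdiv_lt_0_compat; lra). lra. }
  assert (HKd : 2 / INR K <= delta).
  { apply Rlt_le, Rdiv_lt_swap; [lra | apply lt_0_INR; lia | exact HK]. }
  assert (HNd : 2 / (INR N + 2) <= Rmin delta eps).
  { apply Rlt_le, Rdiv_lt_swap; [lra | pose proof (pos_INR N); lra | lra]. }
  pose proof (Rmin_l delta eps). pose proof (Rmin_r delta eps).
  exists (curve_cover p K N), (curve_cover_diam q p K N). split; [| split; [| split]].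
  - intros x Hx. apply curve_cover_covers; assumption.
  - intro i. apply curve_cover_diam_bound; lra || lia.
  - intros i x y Hx Hy. apply (curve_cover_small p q K N i); lra || assumption.
  - intro I. pose proof (curve_cover_diam_sum q p K N I ltac:(lra) Hpq HK1). lra.
Qed.

(** * Infinite length in ℓ_p *)

Definition curve_ray (p : R) (n : nat) (s : R) : rseq := curve p ((2 + s) / 2 ^ (n + 2)).

Lemma curve_ray_time n s : 0 <= s <= 1 ->
  0 <= (2 + s) / 2 ^ (n + 2) <= 1 /\ 2 ^ (n + 2) * ((2 + s) / 2 ^ (n + 2)) = 2 + s.
Proof.
  intro Hs. pose proof (pow2_gt0 (n + 2)).
  assert (4 <= 2 ^ (n + 2)) by (replace 4 with (2 ^ 2) by ring; apply Rle_pow; [lra | lia]).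
  split; [split | field; lra].
  - apply Rmult_le_pos; [lra | left; apply Rinv_0_lt_compat; lra].
  - apply (Rmult_le_reg_r (2 ^ (n + 2))); [lra |].
    replace ((2 + s) / 2 ^ (n + 2) * 2 ^ (n + 2)) with (2 + s) by (field; lra). lra.
Qed.

Lemma curve_ray_in_image p n s : 0 <= s <= 1 -> curve_image p (curve_ray p n s).
Proof. intro Hs. exists ((2 + s) / 2 ^ (n + 2)). split; [apply curve_ray_time |]; auto. Qed.

Lemma curve_ray_block p n s k : 0 <= s <= 1 -> block_of k = n ->
  curve_ray p n s k = s * block_height p n.
Proof.
  intros Hs Hk. unfold curve_ray, curve. rewrite Hk. f_equal. unfold tent.
  rewrite (proj2 (curve_ray_time n s Hs)).
  replace (2 + s - 3) with (s - 1) by ring. rewrite Rabs_left1 by lra.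
  unfold Rmax. destruct Rle_dec; lra.
Qed.

Lemma curve_ray_other_block p n s k : 0 <= s <= 1 -> block_of k <> n -> curve_ray p n s k = 0.
Proof.
  intros Hs Hk. unfold curve_ray, curve.
  rewrite (tent_other_window n (block_of k)); [ring | | exact Hk].
  rewrite (proj2 (curve_ray_time n s Hs)). lra.
Qed.

Lemma curve_ray_dist_same_block p n s s' d : 0 < p -> 0 <= s <= 1 -> 0 <= s' <= 1 ->
  lr_norm_le p (seq_sub (curve_ray p n s) (curve_ray p n s')) d ->
  Rabs (s - s') * / (INR n + 1) <= d.
Proof.
  intros Hp Hs Hs' [Hd Hsum]. rewrite <- (block_norm_diag p n) by exact Hp.
  pose proof (block_norm_gt0 p p n).
  apply (rpow_le_inv p); [exact Hp | apply Rmult_le_pos; [apply Rabs_pos | lra] | exact Hd |].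
  eapply Rle_trans; [| apply (Hsum (2 ^ n - 1 + 2 ^ n - 1)%nat)].
  apply lr_sum_block_ge; [exact Hp | apply Rabs_pos |].
  intros k Hk. unfold seq_sub. rewrite !curve_ray_block by assumption.
  rewrite <- Rmult_minus_distr_r, Rabs_mult, (Rabs_right (block_height p n)).
  - lra.
  - left. apply block_height_gt0.
Qed.

Lemma curve_ray_dist_other_block p n n' s s' d : 0 < p -> 0 <= s <= 1 -> 0 <= s' <= 1 ->
  n <> n' -> lr_norm_le p (seq_sub (curve_ray p n s) (curve_ray p n' s')) d ->
  s * block_height p n <= d.
Proof.
  intros Hp Hs Hs' Hnn' Hd.
  assert (Hk : block_of (2 ^ n - 1) = n) by (apply block_of_spec; pose proof (pow2_ge1 n); lia).
  pose proof (lr_norm_le_coord p _ _ (2 ^ n - 1) Hp Hd) as Hcoord. unfold seq_sub in Hcoord.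
  rewrite curve_ray_block, curve_ray_other_block, Rminus_0_r in Hcoord
    by (assumption || congruence).
  rewrite Rabs_right in Hcoord; [exact Hcoord |].
  apply Rle_ge, Rmult_le_pos; [lra | left; apply block_height_gt0].
Qed.

(* The outer halves [s ∈ [1/2, 1]] of the rays of blocks [0, 1, ...] have ℓ_p
   lengths [1 / (2 (n + 1))]; [arc_start n] is where the n-th one starts when they
   are laid end to end on the real line. *)
Fixpoint arc_start (n : nat) : R :=
  match n with
  | O => 0
  | S m => arc_start m + / (2 * (INR m + 1))
  end.

Lemma arc_start_harmonic n : arc_start (S n) = / 2 * sum_f_R0 (fun m => / (INR m + 1)) n.
Proof.
  induction n as [| n IH].
  - simpl. field.
  - change (arc_start (S (S n))) with (arc_start (S n) + / (2 * (INR (S n) + 1))).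
    rewrite IH, tech5. pose proof (pos_INR (S n)). field. lra.
Qed.

Lemma arc_start_search m y : 0 <= y <= arc_start (S m) ->
  exists n, (n <= m)%nat /\ arc_start n <= y <= arc_start (S n).
Proof.
  induction m as [| m IH]; intro Hy.
  - exists 0%nat. split; [lia | exact Hy].
  - destruct (Rle_dec y (arc_start (S m))) as [Hym | Hym].
    + destruct IH as [n [Hn Hyn]]; [lra |]. exists n. split; [lia | exact Hyn].
    + exists (S m). split; [lia | lra].
Qed.

Definition arc_piece (p : R) (C : nat -> rset) (m i : nat) : R -> Prop :=
  fun y => exists n s, (n <= m)%nat /\ 1 / 2 <= s <= 1 /\
    y = arc_start n + (s - 1 / 2) * / (INR n + 1) /\ C i (curve_ray p n s).

Lemma arc_piece_covers p C m y : (forall x, curve_image p x -> exists i, C i x) ->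
  0 <= y <= arc_start (S m) -> exists i, arc_piece p C m i y.
Proof.
  intros Hcov Hy. destruct (arc_start_search m y Hy) as [n [Hn Hyn]].
  pose proof (pos_INR n).
  set (s := 1 / 2 + (y - arc_start n) * (INR n + 1)).
  assert (Hs : 1 / 2 <= s <= 1).
  { unfold s. simpl arc_start in Hyn. split.
    - assert (0 <= (y - arc_start n) * (INR n + 1)) by (apply Rmult_le_pos; lra). lra.
    - assert (Hlen : (y - arc_start n) * (INR n + 1) <= / (2 * (INR n + 1)) * (INR n + 1))
        by (apply Rmult_le_compat_r; lra).
      replace (/ (2 * (INR n + 1)) * (INR n + 1)) with (1 / 2) in Hlen by (field; lra). lra. }
  destruct (Hcov _ (curve_ray_in_image p n s ltac:(lra))) as [i Hi].
  exists i, n, s. repeat split; try lra; try assumption. unfold s. field. lra.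
Qed.

Lemma arc_piece_diam p C d m i y y' : 0 < p ->
  (forall i, d i <= block_height p m / 4) ->
  (forall i x x', C i x -> C i x' -> lr_norm_le p (seq_sub x x') (d i)) ->
  arc_piece p C m i y -> arc_piece p C m i y' -> Rabs (y - y') <= d i.
Proof.
  intros Hp Hsmall Hdiam [n [s [Hn [Hs [-> Hx]]]]] [n' [s' [Hn' [Hs' [-> Hx']]]]].
  specialize (Hdiam i _ _ Hx Hx').
  destruct (Nat.eq_dec n n') as [<- | Hne].
  - replace (arc_start n + (s - 1 / 2) * / (INR n + 1)
             - (arc_start n + (s' - 1 / 2) * / (INR n + 1)))
      with ((s - s') * / (INR n + 1)) by ring.
    rewrite Rabs_mult, (Rabs_right (/ (INR n + 1))) by (left; apply inv_INR_succ_range).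
    apply (curve_ray_dist_same_block p n); [exact Hp | lra | lra | exact Hdiam].
  - exfalso. pose proof (curve_ray_dist_other_block p n n' s s' _ Hp
      ltac:(lra) ltac:(lra) Hne Hdiam).
    pose proof (block_height_antitone p n m Hp Hn). pose proof (block_height_gt0 p n).
    specialize (Hsmall i). nra.
Qed.

Lemma curve_image_not_H1_finite p : 1 < p -> ~ H1_finite p (curve_image p).
Proof.
  intros Hp [M HM]. destruct (ln_INR_unbounded (4 * M + 8)) as [m Hm].
  pose proof (block_height_gt0 p m).
  destruct (HM (block_height p m / 4) 1 ltac:(lra) ltac:(lra)) as [C [d [Hcov [Hd [Hdiam Hsum]]]]].
  assert (Harc : 0 <= arc_start (S m)).
  { rewrite arc_start_harmonic. apply Rmult_le_pos; [lra |].
    apply cond_pos_sum. intro n. left. apply inv_INR_succ_range. }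
  destruct (interval_length_le_diam_cover (arc_piece p C m) d (fun i => (/ 2) ^ S i)
              0 (arc_start (S m))) as [N HN];
    [exact Harc | apply Hd | intro; apply pow_lt; lra | | |].
  - intros i y y'. apply arc_piece_diam; [lra | apply Hd | exact Hdiam].
  - intros y Hy. apply arc_piece_covers; assumption.
  - assert (Hgeom : sum_f_R0 (fun i => (/ 2) ^ S i) N <= 1).
    { rewrite (sum_eq _ (fun i => (/ 2) ^ i * / 2)) by (intros; simpl; ring).
      rewrite <- scal_sum, tech3 by lra. pose proof (pow_lt (/ 2) (S N) ltac:(lra)).
      replace (/ (1 - / 2)) with 2 by field. unfold Rdiv. nra. }
    pose proof (Hsum N). pose proof (harmonic_ge_ln m). rewrite arc_start_harmonic in HN. lra.
Qed.

Theorem proposition1p1 (p : R) (hp : 1 < p) :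
  (forall q : R, p <= q ->
     (forall x : rseq, in_lr p x -> in_lr q x) /\
     (forall G : rset, rectifiable_curve p G -> rectifiable_curve q G)) /\
  (exists G : rset, is_curve p G /\
     (forall q : R, p < q -> H1_finite q G) /\
     ~ H1_finite p G).
Proof.
  split.
  - intros q Hpq. split.
    + intro x. apply in_lr_mono; lra.
    + intro G. apply rectifiable_curve_mono; lra.
  - exists (curve_image p). split; [| split].
    + exists (curve p). split; [apply curve_lr_continuous, hp | reflexivity].
    + intros q Hpq. apply curve_image_H1_finite; assumption.
    + apply curve_image_not_H1_finite, hp.
Qed.
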